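(* For any integers $k\ge1$ and $N\ge1$, there exist real numbers $a,b$ such that every term of the generalized $k$-FL sequence $\{S^{(a,b)}_{k,n}\}_{n\ge0}$ is an integer and $|\mathcal{Z}(\{S^{(a,b)}_{k,n}\}_{n\ge0})|\ge N$.
   Context: For real $k,a,b$, the generalized $k$-FL sequence is $S^{(a,b)}_{k,0}=2b$, $S^{(a,b)}_{k,1}=bk+a$, $S^{(a,b)}_{k,n}=kS^{(a,b)}_{k,n-1}+S^{(a,b)}_{k,n-2}$ ($n\ge2$). For an integer sequence $\mathcal{A}=\{a_n\}_{n\ge0}$, a prime $p$ is a primitive prime divisor for $a_n$ if $p\mid a_n$ but $p\nmid a_m$ for all $0\le m<n$ with $a_m\neq0$; the Zsigmondy set is $\mathcal{Z}(\mathcal{A})=\{n\ge0: a_n \text{ has no primitive prime divisor}\}$, and $|S|$ denotes cardinality. *)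

From Stdlib Require Import Reals ZArith Znumtheory List.
Open Scope R_scope.

Fixpoint FL (k a b : R) (n : nat) : R :=
  match n with
  | O => 2 * b
  | S m =>
      match m with
      | O => b * k + a
      | S p => k * FL k a b m + FL k a b p
      end
  end.

Definition primitive_prime_divisor (s : nat -> Z) (n : nat) (p : Z) : Prop :=
  prime p /\ (p | s n)%Z /\
  (forall m : nat, (m < n)%nat -> s m <> 0%Z -> ~ (p | s m)%Z).

Definition in_zsigmondy (s : nat -> Z) (n : nat) : Prop :=
  ~ (exists p : Z, primitive_prime_divisor s n p).

(* |Z(s)| >= N : Z(s) contains at least N distinct elements
   (the set may be infinite). *)
Definition zsigmondy_card_ge (s : nat -> Z) (N : nat) : Prop :=
  exists l : list nat, NoDup l /\ length l = N /\
    (forall n, In n l -> in_zsigmondy s n).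

(** With [b = 0] the sequence is [S_n = a F_n], where [F] is the [k]-Fibonacci
    sequence ([F_0 = 0], [F_1 = 1]).  Take [a = F_1 F_2 ... F_(N+1)].  For
    [2 <= n <= N+1], [F_n] divides [a], so every prime divisor of [S_n = a F_n]
    already divides [S_1 = a], which is nonzero; hence [2, ..., N+1] all lie in
    the Zsigmondy set. *)

From Stdlib Require Import Reals ZArith Znumtheory List Lia Lra.

Lemma in_zsigmondy_of_prime_divisors_earlier (s : nat -> Z) (m n : nat) :
  (m < n)%nat -> s m <> 0%Z ->
  (forall p, prime p -> (p | s n)%Z -> (p | s m)%Z) ->
  in_zsigmondy s n.
Proof.
  intros Hmn Hsm Hdiv [p [Hp [Hpn Hprim]]].
  exact (Hprim m Hmn Hsm (Hdiv p Hp Hpn)).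
Qed.

Lemma zsigmondy_card_ge_of_interval (s : nat -> Z) (lo N : nat) :
  (forall n, (lo <= n < lo + N)%nat -> in_zsigmondy s n) ->
  zsigmondy_card_ge s N.
Proof.
  intros Hint; exists (seq lo N); split; [|split].
  - apply seq_NoDup.
  - apply length_seq.
  - intros n Hn; apply Hint, in_seq, Hn.
Qed.

Lemma prime_divisor_mul_of_divides (p a d : Z) :
  prime p -> (d | a)%Z -> (p | a * d)%Z -> (p | a)%Z.
Proof.
  intros Hp Hda Hpad.
  destruct (prime_mult p Hp a d Hpad) as [Hpa | Hpd]; [exact Hpa|].
  exact (Z.divide_trans _ _ _ Hpd Hda).
Qed.

Definition Zprod (l : list Z) : Z := fold_right Z.mul 1%Z l.

Lemma Zprod_divide (l : list Z) (x : Z) : In x l -> (x | Zprod l)%Z.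
Proof.
  induction l as [|y l IH]; simpl; [contradiction|].
  intros [<- | Hx].
  - apply Z.divide_factor_l.
  - apply Z.divide_mul_r, IH, Hx.
Qed.

Lemma Zprod_pos (l : list Z) : (forall x, In x l -> (0 < x)%Z) -> (0 < Zprod l)%Z.
Proof.
  induction l as [|y l IH]; simpl; intros Hpos; [lia|].
  apply Z.mul_pos_pos; [apply Hpos; left; reflexivity|].
  apply IH; intros x Hx; apply Hpos; right; exact Hx.
Qed.

Fixpoint kfib (k : Z) (n : nat) : Z :=
  match n with
  | O => 0%Z
  | S m =>
      match m with
      | O => 1%Z
      | S p => (k * kfib k m + kfib k p)%Z
      end
  end.

Lemma kfib_succ_pos (k : Z) : (1 <= k)%Z -> forall n, (0 < kfib k (S n))%Z.
Proof.
  intros Hk n.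
  enough (H : (0 <= kfib k n)%Z /\ (0 < kfib k (S n))%Z) by apply H.
  induction n as [|n [IH0 IH1]]; [simpl; lia|].
  split; [lia|].
  change (0 < k * kfib k (S n) + kfib k n)%Z; nia.
Qed.

Lemma FL_b0 (k a : Z) (n : nat) :
  FL (IZR k) (IZR a) 0 n = IZR (a * kfib k n).
Proof.
  enough (H : FL (IZR k) (IZR a) 0 n = IZR (a * kfib k n) /\
              FL (IZR k) (IZR a) 0 (S n) = IZR (a * kfib k (S n))) by apply H.
  induction n as [|n [IH0 IH1]].
  - split; simpl; rewrite ?Z.mul_0_r, ?Z.mul_1_r; lra.
  - split; [exact IH1|].
    change (IZR k * FL (IZR k) (IZR a) 0 (S n) + FL (IZR k) (IZR a) 0 n
            = IZR (a * (k * kfib k (S n) + kfib k n)))%R.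
    rewrite IH0, IH1, <- mult_IZR, <- plus_IZR; f_equal; ring.
Qed.

Theorem theorem4p7 (k : Z) (N : nat) :
  (1 <= k)%Z -> (1 <= N)%nat ->
  exists a b : R, exists s : nat -> Z,
    (forall n : nat, FL (IZR k) a b n = IZR (s n)) /\
    zsigmondy_card_ge s N.
Proof.
  intros Hk _.
  set (a := Zprod (map (kfib k) (seq 1 (S N)))).
  assert (Ha_pos : (0 < a)%Z).
  { apply Zprod_pos; intros x Hx.
    apply in_map_iff in Hx as [j [<- Hj]]; apply in_seq in Hj.
    replace j with (S (pred j)) by lia; apply kfib_succ_pos, Hk. }
  exists (IZR a), 0%R, (fun n => (a * kfib k n)%Z); split.
  { intro n; apply FL_b0. }
  apply (zsigmondy_card_ge_of_interval _ 2); intros n Hn.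
  apply (in_zsigmondy_of_prime_divisors_earlier _ 1); simpl; [lia|lia|].
  intros p Hp Hpn; rewrite Z.mul_1_r.
  apply (prime_divisor_mul_of_divides p a (kfib k n) Hp); [|exact Hpn].
  apply Zprod_divide, in_map, in_seq; lia.
Qed.
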